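(* In the migration–birth–death dynamics described below, if the dynamics is not $(t,0)$-stable, then the migration phase at step $t$ increases $\Phi(\mathbf{x})=\sum_v\mathbf{x}_v^2$ by at least $2\alpha_{\min}\epsilon\delta^3$.
   Context: Migration–birth–death dynamics: at each step there is a finite connected undirected graph of types, each type $v$ has mass $\mathbf{x}_v\ge0$, masses sum to $1$, and each edge $uv$ carries a continuously differentiable, increasing, odd function $F_{uv}=F_{vu}:[-1,1]\to[-1,1]$ with $F_{uv}(0)=0$. Let $\alpha_{\min}=\min_{uv,\,x\in[-1,1]}F'_{uv}(x)$ and $\alpha_{\max}=\max_{uv,\,x\in[-1,1]}F'_{uv}(x)$. Fixed parameters: $\epsilon>0$, $\delta>0$, $p\in[0,1]$, and a distribution $\mathcal{D}$ with support $[\beta_{\min},\beta_{\max}]$. Each step consists of three phases in order. (1) Migration: for each edge $uv$, an amount $\mathbf{x}_u\mathbf{x}_vF_{uv}(\mathbf{x}_u-\mathbf{x}_v)$ of mass moves from $v$ to $u$ (negative meaning the reverse direction), all simultaneously from current masses, except that no mass moves along $uv$ if $|\mathbf{x}_u-\mathbf{x}_v|\le\delta$. (2) Birth: with probability $p$ (independently of other steps) a new type $v$ is created; each existing type $u$ independently draws $Z_u\sim\mathcal{D}$ and transfers mass $Z_u\mathbf{x}_u$ to $v$; $v$ is connected to the existing graph arbitrarily so that it remains connected. (3) Death: a type $v$ with $\mathbf{x}_v\le\epsilon$ dies: its mass is split equally among its neighbours, $v$ is removed, and edges are added arbitrarily among its neighbours to keep the graph connected. The dynamics is $(T,d)$-stable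 iff for all $t$ with $T\le t\le T+d$ no population mass moves in the migration phase of step $t$. *)

From HB Require Import structures.
From mathcomp Require Import all_boot all_order all_algebra.
From mathcomp Require Import all_classical all_reals all_analysis.
Set Implicit Arguments. Unset Strict Implicit. Unset Printing Implicit Defensive.
Import Order.TTheory GRing.Theory Num.Theory.
Import numFieldNormedType.Exports.
Local Open Scope classical_set_scope.
Local Open Scope ring_scope.

Definition simple_connected_graph (V : finType) (E : rel V) : Prop :=
  symmetric E /\ irreflexive E /\ (forall u v : V, connect E u v).

Definition mass_vector (R : realType) (V : finType) (x : V -> R) : Prop :=
  (forall v, 0 <= x v) /\ \sum_(v : V) x v = 1.

Definition edge_function (R : realType) (F : R -> R) : Prop :=
  (forall x : R, -1 <= x <= 1 -> derivable F x 1) /\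
  {within `[(-1) : R, 1], continuous (derive1 F)} /\
  (forall x y : R, -1 <= x <= 1 -> -1 <= y <= 1 -> x < y -> F x < F y) /\
  (forall x : R, -1 <= x <= 1 -> F (- x) = - F x) /\
  F 0 = 0 /\
  (forall x : R, -1 <= x <= 1 -> -1 <= F x <= 1).

Definition is_alpha_min (R : realType) (V : finType) (E : rel V)
    (F : V -> V -> R -> R) (alpha : R) : Prop :=
  (forall u v, E u v -> forall x : R, -1 <= x <= 1 -> alpha <= derive1 (F u v) x) /\
  (exists u v, E u v /\ exists x : R, -1 <= x <= 1 /\ derive1 (F u v) x = alpha).

Definition moved (R : realType) (V : finType) (F : V -> V -> R -> R)
    (delta : R) (x : V -> R) (u v : V) : R :=
  if delta < `|x u - x v| then x u * x v * F u v (x u - x v) else 0.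

Definition migrate (R : realType) (V : finType) (E : rel V)
    (F : V -> V -> R -> R) (delta : R) (x : V -> R) : V -> R :=
  fun u => x u + \sum_(v : V | E u v) moved F delta x u v.

(* Some population mass moves in the migration phase
   (i.e. the dynamics is NOT (t,0)-stable at the current step t). *)
Definition mass_moves (R : realType) (V : finType) (E : rel V)
    (F : V -> V -> R -> R) (delta : R) (x : V -> R) : Prop :=
  exists u v, E u v /\ moved F delta x u v != 0.

Definition Phi (R : realType) (V : finType) (x : V -> R) : R :=
  \sum_(v : V) x v ^+ 2.

From HB Require Import structures.
From mathcomp Require Import all_boot all_order all_algebra.
From mathcomp Require Import all_classical all_reals all_analysis.
From mathcomp Require Import lra ring.
Import Order.TTheory GRing.Theory Num.Theory.
Import numFieldNormedType.Exports.
Local Open Scope classical_set_scope.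
Local Open Scope ring_scope.

Set Implicit Arguments.
Unset Strict Implicit.

(* Write the migration as [x'_u = x_u + sum_v h(u,v)] with an antisymmetric
   flow h. Then [Phi x' >= Phi x + 2 sum_u x_u sum_v h(u,v)], and by
   antisymmetry the last sum equals [sum_(u,v) (x_u - x_v) h(u,v)], whose terms
   are nonnegative since each F is increasing with F 0 = 0. On an edge uv where
   mass moves, |x_u - x_v| > delta and both masses exceed eps, so
   [x_u x_v >= eps delta], while the mean value theorem gives
   [(x_u - x_v) F(x_u - x_v) >= alpha_min delta^2]; this term is counted twice,
   as (u,v) and as (v,u). *)

Section DerivativeLowerBound.
Variables (R : realType) (f : R -> R) (alpha a b : R).
Hypothesis f_derivable : {in `[a, b], forall z, derivable f z 1}.
Hypothesis derive1_ge : {in `[a, b], forall z, alpha <= derive1 f z}.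

Lemma ler_derive1_increment s t : a <= s -> s <= t -> t <= b ->
  alpha * (t - s) <= f t - f s.
Proof.
move=> las lst ltb.
have sub_ab z : s <= z <= t -> z \in `[a, b].
  move=> /andP[lsz lzt].
  by rewrite in_itv /= (le_trans las lsz) (le_trans lzt ltb).
have f_is_derive z : z \in `]s, t[ -> is_derive z 1 f (derive1 f z).
  move=> zst; rewrite derive1E; apply/derivableP/f_derivable/sub_ab.
  by rewrite !ltW ?(itvP zst).
have f_cont : {within `[s, t], continuous f}.
  apply: derivable_within_continuous => z zst; apply/f_derivable/sub_ab.
  by rewrite !(itvP zst).
have [c cst ->] := MVT_segment lst f_is_derive f_cont.
by rewrite ler_wpM2r ?subr_ge0 // derive1_ge // sub_ab // !(itvP cst).
Qed.

Lemma ler_sqr_mul_derive1 d : f 0 = 0 -> a <= 0 <= b -> a <= d <= b ->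
  alpha * d ^+ 2 <= d * f d.
Proof.
move=> f0 /andP[la0 l0b] /andP[lad ldb].
case: (ltgtP d 0) => [dlt0|dgt0|->]; last by rewrite f0 !mul0r expr0n mulr0.
- by have := ler_derive1_increment lad (ltW dlt0) l0b; rewrite f0; nra.
- by have := ler_derive1_increment la0 (ltW dgt0) ldb; rewrite f0; nra.
Qed.

End DerivativeLowerBound.

Lemma edge_function_mul_ge0 (R : realType) (F : R -> R) d :
  edge_function F -> -1 <= d <= 1 -> 0 <= d * F d.
Proof.
move=> [_ [_ [F_incr [_ [F0 _]]]]] d_itv.
have zero_itv : -1 <= (0 : R) <= 1 by rewrite lerN10 ?ler01.
case: (ltgtP d 0) => [dlt0|dgt0|->]; last by rewrite mul0r.
- have := F_incr _ _ d_itv zero_itv dlt0; rewrite F0 => Fdlt0.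
  by rewrite nmulr_rge0 // ltW.
- have := F_incr _ _ zero_itv d_itv dgt0; rewrite F0 => Fdgt0.
  by rewrite mulr_ge0 // ltW.
Qed.

Lemma edge_function_mul_ge (R : realType) (F : R -> R) alpha d :
  edge_function F -> (forall c, -1 <= c <= 1 -> alpha <= derive1 F c) ->
  -1 <= d <= 1 -> alpha * d ^+ 2 <= d * F d.
Proof.
move=> [F_derivable [_ [_ [_ [F0 _]]]]] F'_ge d_itv.
by apply: (@ler_sqr_mul_derive1 _ _ _ (-1) 1) => //; rewrite lerN10 ?ler01.
Qed.

Lemma ler_mul_gap (R : realDomainType) (a b eps delta : R) :
  0 <= eps -> eps < a -> eps < b -> delta < `|a - b| -> eps * delta <= a * b.
Proof. by move=> eps_ge0 a_gt b_gt; case: (lerP a b) => _ gap; nra. Qed.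

Section AntisymmetricFlow.
Variables (R : realDomainType) (V : finType).

Lemma sum_mul_antisym (x : V -> R) (h : V -> V -> R) :
  (forall u v, h v u = - h u v) ->
  2 * \sum_u x u * \sum_v h u v = \sum_u \sum_v (x u - x v) * h u v.
Proof.
move=> h_antisym.
have swap : \sum_u \sum_v x v * h u v = - \sum_u \sum_v x u * h u v.
  rewrite exchange_big /= -sumrN; apply: eq_bigr => v _.
  by rewrite -sumrN; apply: eq_bigr => u _; rewrite h_antisym mulrN.
have split : \sum_u \sum_v (x u - x v) * h u v
    = \sum_u \sum_v x u * h u v - \sum_u \sum_v x v * h u v.
  rewrite -sumrB; apply: eq_bigr => u _; rewrite -sumrB.
  by apply: eq_bigr => v _; rewrite mulrBl.
rewrite split swap; under eq_bigr do rewrite mulr_sumr; ring.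
Qed.

Lemma ler_sum_sqrD (x d : V -> R) :
  \sum_u x u ^+ 2 + 2 * \sum_u x u * d u <= \sum_u (x u + d u) ^+ 2.
Proof.
rewrite mulr_sumr -big_split /=; apply: ler_sum => u _.
by have := sqr_ge0 (d u); nra.
Qed.

Lemma ler_pair_sum_sym (g : V -> V -> R) u v :
  (forall p q, 0 <= g p q) -> (forall p q, g q p = g p q) -> u != v ->
  2 * g u v <= \sum_p \sum_q g p q.
Proof.
move=> g_ge0 g_sym u_neq_v.
have row_ge0 p : 0 <= \sum_q g p q by apply: sumr_ge0.
have uv_le : g u v <= \sum_q g u q by rewrite (bigD1 v) //= lerDl sumr_ge0.
have vu_le : g u v <= \sum_q g v q.
  by rewrite (bigD1 u) 1?eq_sym //= g_sym lerDl sumr_ge0.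
have v_row_le : \sum_q g v q <= \sum_(p | p != u) \sum_q g p q.
  by rewrite [leRHS](bigD1 v) 1?eq_sym //= lerDl sumr_ge0.
by rewrite (bigD1 u) //=; lra.
Qed.

End AntisymmetricFlow.

Lemma mass_vector_le1 (R : realType) (V : finType) (x : V -> R) v :
  mass_vector x -> x v <= 1.
Proof.
move=> [x_ge0 x_sum1]; rewrite -x_sum1 (bigD1 v) //= lerDl.
by apply: sumr_ge0 => w _; apply: x_ge0.
Qed.

Section Migration.
Variables (R : realType) (V : finType) (E : rel V) (F : V -> V -> R -> R).
Variables (delta : R) (x : V -> R).

Definition flow u v : R := if E u v then moved F delta x u v else 0.

Lemma migrate_flowE u : migrate E F delta x u = x u + \sum_v flow u v.
Proof. by rewrite /migrate big_mkcond. Qed.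

Hypothesis E_sym : symmetric E.
Hypothesis F_sym : forall u v, F u v = F v u.
Hypothesis F_edge : forall u v, E u v -> edge_function (F u v).
Hypothesis x_mass : mass_vector x.

Lemma mass_subr_itv u v : -1 <= x u - x v <= 1.
Proof.
have [x_ge0 _] := x_mass.
have := x_ge0 u; have := x_ge0 v.
have := mass_vector_le1 u x_mass; have := mass_vector_le1 v x_mass.
by move=> *; apply/andP; split; lra.
Qed.

Lemma flow_antisym u v : flow v u = - flow u v.
Proof.
rewrite /flow E_sym; case: ifP => Euv; last by rewrite oppr0.
rewrite /moved distrC; case: ifP => _; last by rewrite oppr0.
have [_ [_ [_ [F_odd _]]]] := F_edge Euv.
by rewrite F_sym -opprB F_odd ?mass_subr_itv // mulrN [x v * x u]mulrC.
Qed.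

Lemma flow_energy_ge0 u v : 0 <= (x u - x v) * flow u v.
Proof.
have [x_ge0 _] := x_mass.
rewrite /flow /moved; case: ifP => Euv; last by rewrite mulr0.
case: ifP => _; last by rewrite mulr0.
rewrite mulrCA mulr_ge0 //; first by rewrite mulr_ge0.
exact: edge_function_mul_ge0 (F_edge Euv) (mass_subr_itv u v).
Qed.

Lemma flow_energy_sym u v :
  (x v - x u) * flow v u = (x u - x v) * flow u v.
Proof. by rewrite flow_antisym; ring. Qed.

Lemma Phi_migrate_ge :
  Phi x + \sum_u \sum_v (x u - x v) * flow u v <= Phi (migrate E F delta x).
Proof.
rewrite /Phi -(sum_mul_antisym x flow_antisym).
under [leRHS]eq_bigr do rewrite migrate_flowE.
exact: ler_sum_sqrD.
Qed.

Lemma moved_energy_ge eps alpha u v :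
  0 <= eps -> 0 <= delta -> (forall w, eps < x w) -> E u v ->
  (forall c, -1 <= c <= 1 -> alpha <= derive1 (F u v) c) ->
  moved F delta x u v != 0 ->
  alpha * eps * delta ^+ 3 <= (x u - x v) * moved F delta x u v.
Proof.
move=> eps_ge0 delta_ge0 x_gt Euv F'_ge.
rewrite /moved; case: ifP => gap; last by rewrite eqxx.
move=> _.
have -> : (x u - x v) * (x u * x v * F u v (x u - x v))
    = (x u * x v) * ((x u - x v) * F u v (x u - x v)) by ring.
have mass_ge := ler_mul_gap eps_ge0 (x_gt u) (x_gt v) gap.
have mass_ge0 : 0 <= x u * x v by have [x_ge0 _] := x_mass; rewrite mulr_ge0.
have energy_ge0 := edge_function_mul_ge0 (F_edge Euv) (mass_subr_itv u v).
case: (lerP alpha 0) => [alpha_le0|alpha_gt0].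
  rewrite (le_trans _ (mulr_ge0 mass_ge0 energy_ge0)) //.
  by rewrite -mulrA mulr_le0_ge0 // mulr_ge0 // exprn_ge0.
have energy_ge := edge_function_mul_ge (F_edge Euv) F'_ge (mass_subr_itv u v).
have sqr_gap : delta ^+ 2 <= (x u - x v) ^+ 2.
  by rewrite -(real_normK (num_real (x u - x v))) ler_sqr ?nnegrE // ltW.
have -> : alpha * eps * delta ^+ 3 = (eps * delta) * (alpha * delta ^+ 2).
  by ring.
apply: ler_pM => //.
- exact: mulr_ge0.
- exact: mulr_ge0 (ltW alpha_gt0) (exprn_ge0 _ delta_ge0).
- exact: le_trans (ler_wpM2l (ltW alpha_gt0) sqr_gap) energy_ge.
Qed.

End Migration.

Theorem mainTheorem11 (R : realType) (V : finType) (E : rel V)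
    (F : V -> V -> R -> R) (x : V -> R) (eps delta alpha_min : R) :
  0 < eps -> 0 < delta ->
  simple_connected_graph E ->
  (forall u v, F u v = F v u) ->
  (forall u v, E u v -> edge_function (F u v)) ->
  is_alpha_min E F alpha_min ->
  mass_vector x ->
  (forall v, eps < x v) ->
  mass_moves E F delta x ->
  Phi x + 2 * alpha_min * eps * delta ^+ 3 <= Phi (migrate E F delta x).
Proof.
move=> eps_gt0 delta_gt0 [E_sym [E_irr _]] F_sym F_edge [alpha_lb _] x_mass.
move=> x_gt [u [v [Euv moved_neq0]]].
have u_neq_v : u != v by apply: contraTneq Euv => ->; rewrite E_irr.
apply: le_trans (Phi_migrate_ge delta E_sym F_sym F_edge x_mass).
rewrite lerD2l.
apply: le_trans (ler_pair_sum_sym (flow_energy_ge0 delta F_edge x_mass)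
  (flow_energy_sym delta E_sym F_sym F_edge x_mass) u_neq_v).
have -> : 2 * alpha_min * eps * delta ^+ 3 = 2 * (alpha_min * eps * delta ^+ 3).
  by ring.
rewrite /flow Euv ler_pM2l //.
exact: (moved_energy_ge F_edge x_mass (ltW eps_gt0) (ltW delta_gt0) x_gt Euv
  (alpha_lb u v Euv) moved_neq0).
Qed.
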